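(* Let $\mathcal{T}$ be a $\Sigma_1$-theory such that for every $n\in\mathbb{N}$ there exists a $\mathcal{T}$-interpretation $\mathcal{A}$ with $n<|\sigma^{\mathcal{A}}|<\omega$. Then $\mathcal{T}$ has the finite model property with respect to $\{\sigma\}$.
   Context: $\Sigma_1$ is the empty signature (no function symbols, only equality, interpreted as identity) with one sort $\sigma$. A $\Sigma_1$-interpretation is a structure (nonempty domain $\sigma^{\mathcal{A}}$) plus values for variables; a $\Sigma_1$-theory $\mathcal{T}$ is the class of all $\Sigma_1$-interpretations satisfying a given set of closed formulas (the $\mathcal{T}$-interpretations). $\mathcal{T}$ has the finite model property w.r.t. $\{\sigma\}$ if every quantifier-free formula satisfied by some $\mathcal{T}$-interpretation is satisfied by some $\mathcal{T}$-interpretation $\mathcal{A}$ with $\sigma^{\mathcal{A}}$ finite. *)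

(* first-order logic over the empty one-sorted signature
   Sigma_1 (only equality, interpreted as identity). *)
From Stdlib Require Import Arith List.
Import ListNotations.

Inductive formula : Type :=
| FEq     : nat -> nat -> formula
| FTrue   : formula
| FFalse  : formula
| FNot    : formula -> formula
| FAnd    : formula -> formula -> formula
| FOr     : formula -> formula -> formula
| FImp    : formula -> formula -> formula
| FForall : nat -> formula -> formula
| FExists : nat -> formula -> formula.

Fixpoint free_in (x : nat) (phi : formula) : Prop :=
  match phi with
  | FEq i j => x = i \/ x = j
  | FTrue | FFalse => False
  | FNot p => free_in x p
  | FAnd p q | FOr p q | FImp p q => free_in x p \/ free_in x q
  | FForall y p | FExists y p => x <> y /\ free_in x p
  end.

Definition closed (phi : formula) : Prop := forall x, ~ free_in x phi.

Fixpoint qfree (phi : formula) : Prop :=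
  match phi with
  | FEq _ _ | FTrue | FFalse => True
  | FNot p => qfree p
  | FAnd p q | FOr p q | FImp p q => qfree p /\ qfree q
  | FForall _ _ | FExists _ _ => False
  end.

(* A Sigma_1-interpretation: a domain sigma^A (nonempty, witnessed by the
   valuation) together with values for all variables. *)
Record interp : Type := Interp { dom : Type; val : nat -> dom }.

Definition upd {D : Type} (v : nat -> D) (x : nat) (d : D) : nat -> D :=
  fun y => if Nat.eqb y x then d else v y.

Fixpoint sat {D : Type} (v : nat -> D) (phi : formula) : Prop :=
  match phi with
  | FEq i j => v i = v j
  | FTrue => True
  | FFalse => False
  | FNot p => ~ sat v p
  | FAnd p q => sat v p /\ sat v q
  | FOr p q => sat v p \/ sat v q
  | FImp p q => sat v p -> sat v q
  | FForall x p => forall d : D, sat (upd v x d) p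
  | FExists x p => exists d : D, sat (upd v x d) p
  end.

Definition satisfies (A : interp) (phi : formula) : Prop := sat (val A) phi.

(* A theory is given by a set Ax of closed formulas; its T-interpretations
   are the interpretations satisfying every axiom. *)
Definition T_interp (Ax : formula -> Prop) (A : interp) : Prop :=
  forall phi, Ax phi -> satisfies A phi.

Definition finite_dom (A : interp) : Prop :=
  exists l : list (dom A), forall d : dom A, In d l.

Definition card_gt (A : interp) (n : nat) : Prop :=
  exists l : list (dom A), NoDup l /\ n < length l.

Definition finite_model_property (Ax : formula -> Prop) : Prop :=
  forall phi, qfree phi ->
    (exists A, T_interp Ax A /\ satisfies A phi) ->
    exists A, T_interp Ax A /\ finite_dom A /\ satisfies A phi.

(** A quantifier-free formula with variables among [x_0, ..., x_m] only
    observes which of these variables are equal.  Their equality pattern under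
    a satisfying valuation can be reproduced in any domain with more than [m]
    elements, and the axioms, being closed, hold under every valuation.  So a
    finite [T]-interpretation with more than [m] elements, equipped with a new
    valuation copying that pattern, satisfies the formula. *)

From Stdlib Require Import Arith List Lia Classical.

Lemma sat_agree_free {D : Type} (phi : formula) (v w : nat -> D) :
  (forall x, free_in x phi -> v x = w x) -> (sat v phi <-> sat w phi).
Proof.
  revert v w; induction phi; intros v w Hvw; simpl in *.
  - rewrite (Hvw n (or_introl eq_refl)), (Hvw n0 (or_intror eq_refl)); tauto.
  - tauto.
  - tauto.
  - rewrite (IHphi v w Hvw); tauto.
  - rewrite (IHphi1 v w), (IHphi2 v w); auto; tauto.
  - rewrite (IHphi1 v w), (IHphi2 v w); auto; tauto.
  - rewrite (IHphi1 v w), (IHphi2 v w); auto; tauto.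
  - assert (Hupd : forall d, sat (upd v n d) phi <-> sat (upd w n d) phi).
    { intro d; apply IHphi; intros x Hx; unfold upd.
      destruct (Nat.eqb_spec x n); auto. }
    split; intros Hs d; apply Hupd; auto.
  - assert (Hupd : forall d, sat (upd v n d) phi <-> sat (upd w n d) phi).
    { intro d; apply IHphi; intros x Hx; unfold upd.
      destruct (Nat.eqb_spec x n); auto. }
    split; intros [d Hs]; exists d; apply Hupd; auto.
Qed.

Lemma sat_closed {D : Type} (phi : formula) (v w : nat -> D) :
  closed phi -> sat v phi -> sat w phi.
Proof.
  intros Hcl; apply sat_agree_free; intros x Hx; contradiction (Hcl x).
Qed.

Fixpoint var_bound (phi : formula) : nat :=
  match phi with
  | FEq i j => max i j
  | FTrue | FFalse => 0
  | FNot p => var_bound p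
  | FAnd p q | FOr p q | FImp p q => max (var_bound p) (var_bound q)
  | FForall _ p | FExists _ p => var_bound p
  end.

Definition same_pattern {D E : Type} (k : nat) (v : nat -> D) (w : nat -> E) :
  Prop :=
  forall i j, i < k -> j < k -> (v i = v j <-> w i = w j).

Lemma same_pattern_le {D E : Type} (k k' : nat) (v : nat -> D) (w : nat -> E) :
  k' <= k -> same_pattern k v w -> same_pattern k' v w.
Proof. intros Hle Hvw i j Hi Hj; apply Hvw; lia. Qed.

Lemma qfree_sat_pattern {D E : Type} (phi : formula) (v : nat -> D)
  (w : nat -> E) :
  qfree phi -> same_pattern (S (var_bound phi)) v w -> (sat v phi <-> sat w phi).
Proof.
  induction phi; simpl; intros Hqf Hvw; try tauto; [apply Hvw; lia | ..];
    destruct Hqf; rewrite IHphi1, IHphi2; try tauto;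
    eapply same_pattern_le; try exact Hvw; lia.
Qed.

Lemma NoDup_fresh {E : Type} (l s : list E) :
  NoDup l -> length s < length l -> exists x, In x l /\ ~ In x s.
Proof.
  intros Hnd Hlt; apply NNPP; intro Hnone.
  assert (Hincl : incl l s).
  { intros x Hx; apply NNPP; intro Hxs; apply Hnone; eauto. }
  pose proof (NoDup_incl_length Hnd Hincl); lia.
Qed.

Lemma same_pattern_extend {D E : Type} (k : nat) (v : nat -> D) (w : nat -> E)
  (y : E) :
  same_pattern k v w -> (forall j, j < k -> (v j = v k <-> w j = y)) ->
  same_pattern (S k) v (upd w k y).
Proof.
  intros Hvw Hy i j Hi Hj; unfold upd.
  destruct (Nat.eqb_spec i k), (Nat.eqb_spec j k); subst.
  - tauto.
  - split; intro Heq; symmetry; apply (Hy j); solve [lia | congruence].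
  - apply Hy; lia.
  - apply Hvw; lia.
Qed.

Lemma same_pattern_realize {D E : Type} (v : nat -> D) (e0 : E) (l : list E) :
  NoDup l -> forall k, k <= length l -> exists w : nat -> E, same_pattern k v w.
Proof.
  intros Hnd k; induction k as [|k IH]; intros Hk.
  - exists (fun _ => e0); intros i j Hi; lia.
  - destruct IH as [w Hvw]; [lia|].
    destruct (classic (exists j, j < k /\ v j = v k)) as [[j [Hj Hvj]] | Hnew].
    + exists (upd w k (w j)); apply same_pattern_extend; auto.
      intros i Hi; rewrite <- Hvj; apply Hvw; lia.
    + destruct (NoDup_fresh l (map w (seq 0 k)) Hnd) as [y [_ Hy]].
      { rewrite length_map, length_seq; lia. }
      exists (upd w k y); apply same_pattern_extend; auto.
      intros i Hi; split; intro Heq.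
      * exfalso; apply Hnew; eauto.
      * exfalso; apply Hy; rewrite <- Heq; apply in_map, in_seq; lia.
Qed.

Theorem lemma51 (Ax : formula -> Prop)
  (Hclosed : forall phi, Ax phi -> closed phi) :
  (forall n : nat, exists A : interp,
      T_interp Ax A /\ card_gt A n /\ finite_dom A) ->
  finite_model_property Ax.
Proof.
  intros Hlarge phi Hqf [A [HA HsatA]].
  destruct (Hlarge (var_bound phi)) as [B [HB [[l [Hnd Hlen]] Hfin]]].
  destruct (same_pattern_realize (val A) (val B 0) l Hnd (S (var_bound phi)))
    as [w Hw]; [lia|].
  exists (Interp (dom B) w); split; [|split].
  - intros ax Hax; exact (sat_closed ax (val B) w (Hclosed ax Hax) (HB ax Hax)).
  - exact Hfin.
  - apply (qfree_sat_pattern phi (val A) w Hqf Hw); exact HsatA.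
Qed.
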